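(* Let $\beta_*>0$ be the unique positive solution of $I_2(\beta)=\frac12I_1(\beta)$. If $0<\beta\le\beta_*$, then $$I_\ell(\beta)\le\frac{I_1(\beta)}{\ell}\qquad\text{for all integers }\ell\ge1,$$ and the inequality is strict for every $\ell\ge3$.
   Context: $I_\ell$ denotes the $\ell$-th modified Bessel function of the first kind, $I_\ell(\beta)=\sum_{k\ge0}\frac{1}{k!(k+\ell)!}(\beta/2)^{2k+\ell}$. *)

From Stdlib Require Import Reals Factorial.
From Coquelicot Require Import Coquelicot.
Open Scope R_scope.

Definition besselI (l : nat) (b : R) : R :=
  Series (fun k : nat => (b / 2) ^ (2 * k + l) / (INR (fact k) * INR (fact (k + l)))).

From Stdlib Require Import Reals Lra Lia Factorial.
From Coquelicot Require Import Coquelicot.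
Open Scope R_scope.

(* Comparing the series termwise gives (l+1) I_{l+1}(b) < l I_l(b) whenever
   0 < b <= 2l, so for b <= 4 the sequence l I_l(b) decreases strictly from
   l = 2 on, and everything reduces to 2 I_2(b) <= I_1(b).  The gap
   2 I_2 - I_1 is continuous, negative on (0, 2) (termwise again) and positive
   at 4 (a partial sum plus a geometric tail).  By the intermediate value
   theorem and uniqueness of its positive zero, beta_* <= 4 and the gap is
   nonpositive on (0, beta_*]. *)

Lemma ex_series_Rmult_l (c : R) (a : nat -> R) :
  ex_series a -> ex_series (fun n => c * a n).
Proof. exact (@ex_series_scal_l R_AbsRing R_NormedModule c a). Qed.

Lemma Series_nonneg (a : nat -> R) :
  ex_series a -> (forall n, 0 <= a n) -> 0 <= Series a.
Proof.
  intros Ha Hpos.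
  pose proof (Series_le (fun n => 0 * a n) a) as Hle.
  rewrite Series_scal_l in Hle.
  enough (0 * Series a <= Series a) by lra.
  apply Hle; [|exact Ha].
  intro n; specialize (Hpos n); lra.
Qed.

Lemma Series_pos (a : nat -> R) (m : nat) :
  ex_series a -> (forall n, 0 <= a n) -> 0 < a m -> 0 < Series a.
Proof.
  revert a; induction m as [|m IH]; intros a Ha Hpos Hm;
    rewrite Series_incr_1 by exact Ha;
    pose proof (proj1 (ex_series_incr_1 a) Ha) as Ha'.
  - pose proof (Series_nonneg _ Ha' (fun n => Hpos (S n))). lra.
  - pose proof (IH _ Ha' (fun n => Hpos (S n)) Hm). pose proof (Hpos O). lra.
Qed.

Lemma Series_lt (a b : nat -> R) (m : nat) :
  ex_series a -> ex_series b -> (forall n, a n <= b n) -> a m < b m ->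
  Series a < Series b.
Proof.
  intros Ha Hb Hle Hm.
  assert (Hdiff : 0 < Series (fun n => b n - a n)).
  { apply (Series_pos _ m).
    - exact (ex_series_minus b a Hb Ha).
    - intro n; specialize (Hle n); lra.
    - lra. }
  rewrite Series_minus in Hdiff by assumption. lra.
Qed.

Lemma Series_le_geom (a : nat -> R) (r : R) :
  0 <= r < 1 -> (forall n, 0 <= a n) -> (forall n, a (S n) <= r * a n) ->
  Series a <= a O / (1 - r).
Proof.
  intros Hr Hpos Hratio.
  assert (Hgeom : forall n, a n <= a O * r ^ n).
  { induction n as [|n IH]; simpl.
    - lra.
    - specialize (Hratio n). nra. }
  assert (Habs : Rabs r < 1) by (rewrite Rabs_pos_eq; lra).
  unfold Rdiv. rewrite <- (Series_geom r Habs), <- Series_scal_l.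
  apply Series_le.
  - intro n; split; [apply Hpos | apply Hgeom].
  - exact (ex_series_Rmult_l _ _ (ex_series_geom r Habs)).
Qed.

Lemma unique_root_le (f : R -> R) (s a c : R) :
  continuity f -> 0 < a < c -> f a < 0 -> 0 < f c ->
  (forall z, 0 < z -> f z = 0 -> z = s) -> s <= c.
Proof.
  intros Hf Hac Ha Hc Huniq.
  destruct (IVT f a c Hf (proj2 Hac) Ha Hc) as [z [Hz Hfz]].
  rewrite <- (Huniq z); lra.
Qed.

Lemma nonpos_below_unique_root (f : R -> R) (s a b : R) :
  continuity f -> 0 < a -> (forall x, 0 < x <= a -> f x < 0) ->
  (forall z, 0 < z -> f z = 0 -> z = s) -> 0 < b <= s -> f b <= 0.
Proof.
  intros Hf Ha Hneg Huniq Hb.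
  destruct (Rle_lt_dec b a) as [Hba|Hab]; [left; apply Hneg; lra|].
  destruct (Rle_lt_dec (f b) 0) as [|Hfb]; [assumption|].
  destruct (IVT f a b Hf Hab (Hneg a (conj Ha (Rle_refl a))) Hfb) as [z [Hz Hfz]].
  assert (z = s) by (apply Huniq; lra).
  replace b with z by lra. lra.
Qed.

Definition besselI_term (l : nat) (b : R) (k : nat) : R :=
  (b / 2) ^ (2 * k + l) / (INR (fact k) * INR (fact (k + l))).

Lemma besselI_Series (l : nat) (b : R) : besselI l b = Series (besselI_term l b).
Proof. reflexivity. Qed.

Lemma besselI_term_gt0 (l : nat) (b : R) (k : nat) : 0 < b -> 0 < besselI_term l b k.
Proof.
  intro Hb. apply Rdiv_lt_0_compat.
  - apply pow_lt; lra.
  - apply Rmult_lt_0_compat; apply INR_fact_lt_0.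
Qed.

Lemma besselI_term_S_order (l : nat) (b : R) (k : nat) :
  besselI_term (S l) b k = besselI_term l b k * (b / 2) / INR (k + S l).
Proof.
  unfold besselI_term.
  replace (k + S l)%nat with (S (k + l)) by lia.
  replace (2 * k + S l)%nat with (S (2 * k + l)) by lia.
  rewrite fact_simpl, mult_INR. simpl pow.
  pose proof (INR_fact_lt_0 k). pose proof (INR_fact_lt_0 (k + l)).
  pose proof (lt_0_INR (S (k + l)) (Nat.lt_0_succ _)).
  field. lra.
Qed.

Lemma besselI_term_S_index (l : nat) (b : R) (k : nat) :
  besselI_term l b (S k) =
  besselI_term l b k * (b / 2) ^ 2 / (INR (S k) * INR (S (k + l))).
Proof.
  unfold besselI_term.
  replace (S k + l)%nat with (S (k + l)) by lia.
  replace (2 * S k + l)%nat with (S (S (2 * k + l))) by lia.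
  rewrite !fact_simpl, !mult_INR. simpl pow.
  pose proof (INR_fact_lt_0 k). pose proof (INR_fact_lt_0 (k + l)).
  pose proof (lt_0_INR (S k) (Nat.lt_0_succ _)).
  pose proof (lt_0_INR (S (k + l)) (Nat.lt_0_succ _)).
  field. lra.
Qed.

Definition besselI_coef (l k : nat) : R := / (INR (fact k) * INR (fact (k + l))).

Lemma besselI_term_pseries (l : nat) (b : R) (k : nat) :
  besselI_term l b k = (b / 2) ^ l * (besselI_coef l k * ((b / 2) ^ 2) ^ k).
Proof.
  unfold besselI_term, besselI_coef.
  rewrite pow_add, <- pow_mult. unfold Rdiv. ring.
Qed.

Lemma besselI_coef_ratio (l n : nat) :
  besselI_coef l (S n) / besselI_coef l n = / (INR (S n) * INR (S (n + l))).
Proof.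
  unfold besselI_coef.
  replace (S n + l)%nat with (S (n + l)) by lia.
  rewrite !fact_simpl, !mult_INR.
  pose proof (INR_fact_lt_0 n). pose proof (INR_fact_lt_0 (n + l)).
  pose proof (lt_0_INR (S n) (Nat.lt_0_succ _)).
  pose proof (lt_0_INR (S (n + l)) (Nat.lt_0_succ _)).
  field. repeat split; lra.
Qed.

Lemma CV_radius_besselI_coef (l : nat) : CV_radius (besselI_coef l) = p_infty.
Proof.
  apply CV_radius_infinite_DAlembert.
  - intro n. apply Rinv_neq_0_compat, Rgt_not_eq.
    apply Rmult_lt_0_compat; apply INR_fact_lt_0.
  - apply is_lim_seq_le_le with (u := fun _ => 0) (w := fun n => / INR (S n)).
    + intro n. rewrite besselI_coef_ratio.
      pose proof (lt_0_INR (S n) (Nat.lt_0_succ _)).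
      assert (1 <= INR (S (n + l))) by (apply (le_INR 1); lia).
      assert (0 < / (INR (S n) * INR (S (n + l)))).
      { apply Rinv_0_lt_compat, Rmult_lt_0_compat; lra. }
      rewrite Rabs_pos_eq by lra.
      split; [lra|]. apply Rinv_le_contravar; nra.
    + apply is_lim_seq_const.
    + replace (Finite 0) with (Rbar_inv p_infty) by reflexivity.
      apply is_lim_seq_inv; [|discriminate].
      apply (is_lim_seq_incr_1 INR), is_lim_seq_INR.
Qed.

Lemma ex_series_besselI_term (l : nat) (b : R) : ex_series (besselI_term l b).
Proof.
  assert (Hps : ex_pseries (besselI_coef l) ((b / 2) ^ 2)).
  { apply CV_radius_inside. rewrite CV_radius_besselI_coef. exact I. }
  eapply ex_series_ext; [|exact (ex_series_Rmult_l ((b / 2) ^ l) _ Hps)].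
  intro n. rewrite besselI_term_pseries, (pow_n_pow ((b / 2) ^ 2)).
  apply Rmult_eq_compat_l, Rmult_comm.
Qed.

Lemma besselI_PSeries (l : nat) (b : R) :
  besselI l b = (b / 2) ^ l * PSeries (besselI_coef l) ((b / 2) ^ 2).
Proof.
  rewrite besselI_Series. unfold PSeries. rewrite <- Series_scal_l.
  apply Series_ext. intro n. rewrite besselI_term_pseries. ring.
Qed.

Lemma continuity_besselI (l : nat) : continuity (besselI l).
Proof.
  assert (Hhalf : forall n, continuity (fun b => (b / 2) ^ n)).
  { intros n x. apply derivable_continuous_pt. unfold Rdiv.
    apply (derivable_pt_comp (fun b => b * / 2) (fun y => y ^ n)).
    - apply derivable_pt_mult; [apply derivable_pt_id | apply derivable_pt_const].
    - apply derivable_pt_pow. }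
  intro x.
  apply continuity_pt_ext with
    (f := fun b => (b / 2) ^ l * PSeries (besselI_coef l) ((b / 2) ^ 2)).
  { intro; symmetry; apply besselI_PSeries. }
  apply (continuity_pt_mult (fun b => (b / 2) ^ l)); [apply Hhalf|].
  apply (continuity_pt_comp (fun b => (b / 2) ^ 2)); [apply Hhalf|].
  apply PSeries_continuity. rewrite CV_radius_besselI_coef. exact I.
Qed.

Definition besselI_gap_term (b : R) (k : nat) : R :=
  besselI_term 1 b k * ((INR k + 2 - b) / (INR k + 2)).

Lemma besselI_gap_term_eq (b : R) (k : nat) :
  besselI_term 1 b k - 2 * besselI_term 2 b k = besselI_gap_term b k.
Proof.
  unfold besselI_gap_term. rewrite (besselI_term_S_order 1), plus_INR.
  pose proof (pos_INR k). simpl INR. field. lra.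
Qed.

Lemma ex_series_besselI_gap_term (b : R) : ex_series (besselI_gap_term b).
Proof.
  apply (ex_series_ext _ _ (besselI_gap_term_eq b)).
  exact (ex_series_minus _ _ (ex_series_besselI_term 1 b)
           (ex_series_Rmult_l 2 _ (ex_series_besselI_term 2 b))).
Qed.

Lemma besselI1_sub_twice_besselI2 (b : R) :
  besselI 1 b - 2 * besselI 2 b = Series (besselI_gap_term b).
Proof.
  rewrite !besselI_Series, <- Series_scal_l, <- Series_minus.
  - exact (Series_ext _ _ (besselI_gap_term_eq b)).
  - apply ex_series_besselI_term.
  - exact (ex_series_Rmult_l 2 _ (ex_series_besselI_term 2 b)).
Qed.

Lemma twice_besselI2_lt_besselI1 (b : R) : 0 < b < 2 -> 2 * besselI 2 b < besselI 1 b.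
Proof.
  intro Hb. enough (0 < besselI 1 b - 2 * besselI 2 b) by lra.
  rewrite besselI1_sub_twice_besselI2.
  assert (Hgap : forall k, 0 < besselI_gap_term b k).
  { intro k. pose proof (pos_INR k).
    apply Rmult_lt_0_compat; [apply besselI_term_gt0; lra|].
    apply Rdiv_lt_0_compat; lra. }
  apply (Series_pos _ 0); [apply ex_series_besselI_gap_term| |apply Hgap].
  intro k; left; apply Hgap.
Qed.

Lemma Series_besselI_term_tail_at_4 :
  Series (fun k => besselI_term 1 4 (3 + k)) <= 10 / 9.
Proof.
  replace (10 / 9) with (besselI_term 1 4 3 / (1 - 1 / 5))
    by (unfold besselI_term; simpl; field).
  apply Series_le_geom; [lra| intro; left; apply besselI_term_gt0; lra|].
  intro n. replace (3 + S n)%nat with (S (3 + n)) by lia.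
  rewrite besselI_term_S_index.
  pose proof (besselI_term_gt0 1 4 (3 + n) ltac:(lra)).
  assert (4 <= INR (S (3 + n))) by (replace 4 with (INR 4) by (simpl; ring); apply le_INR; lia).
  assert (5 <= INR (S (3 + n + 1))) by (replace 5 with (INR 5) by (simpl; ring); apply le_INR; lia).
  set (t := besselI_term 1 4 (3 + n)) in *.
  assert (Hratio : (4 / 2) ^ 2 / (INR (S (3 + n)) * INR (S (3 + n + 1))) <= 1 / 5).
  { apply Rle_div_l; nra. }
  unfold Rdiv in *. rewrite Rmult_assoc, (Rmult_comm (1 * / 5)).
  apply Rmult_le_compat_l; lra.
Qed.

Lemma besselI1_lt_twice_besselI2_at_4 : besselI 1 4 < 2 * besselI 2 4.
Proof.
  enough (besselI 1 4 - 2 * besselI 2 4 < 0) by lra.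
  rewrite besselI1_sub_twice_besselI2.
  rewrite (Series_incr_n _ 3) by (lia || apply ex_series_besselI_gap_term).
  assert (Htail : Series (fun k => besselI_gap_term 4 (3 + k)) <= 10 / 9).
  { eapply Rle_trans; [|exact Series_besselI_term_tail_at_4].
    apply Series_le; [|apply (ex_series_incr_n (besselI_term 1 4)), ex_series_besselI_term].
    intro k. unfold besselI_gap_term.
    pose proof (besselI_term_gt0 1 4 (3 + k) ltac:(lra)).
    pose proof (pos_INR (3 + k)).
    assert (3 <= INR (3 + k)) by (replace 3 with (INR 3) by (simpl; ring); apply le_INR; lia).
    assert (0 <= (INR (3 + k) + 2 - 4) / (INR (3 + k) + 2) <= 1).
    { split; [apply Rdiv_le_0_compat; lra | apply Rle_div_l; lra]. }
    nra. }
  assert (Hhead : sum_f_R0 (besselI_gap_term 4) 2 = - 10 / 3).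
  { simpl. unfold besselI_gap_term, besselI_term. simpl. field. }
  simpl Init.Nat.pred. lra.
Qed.

Lemma scaled_besselI_term_S_order (l : nat) (b : R) (k : nat) :
  0 < b <= 2 * INR l ->
  INR (S l) * besselI_term (S l) b k <= INR l * besselI_term l b k /\
  ((0 < k)%nat -> INR (S l) * besselI_term (S l) b k < INR l * besselI_term l b k).
Proof.
  intro Hb. rewrite besselI_term_S_order.
  pose proof (besselI_term_gt0 l b k (proj1 Hb)).
  set (t := besselI_term l b k) in *.
  set (p := INR (S l)). set (q := INR (k + S l)).
  assert (Hp : 0 < p) by apply (lt_0_INR _ (Nat.lt_0_succ _)).
  assert (Hpq : p <= q) by (apply le_INR; lia).
  replace (p * (t * (b / 2) / q)) with (t * (b / 2) * (p / q)) by (field; lra).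
  assert (Hsmall : 0 <= t * (INR l - b / 2)) by (apply Rmult_le_pos; lra).
  split.
  - assert (Hratio : p / q <= 1)
      by (apply Rle_div_l; lra).
    assert (0 <= t * (b / 2) * (1 - p / q)) by (apply Rmult_le_pos; nra).
    nra.
  - intro Hk.
    assert (Hratio : p / q < 1)
      by (apply Rlt_div_l; [lra|]; rewrite Rmult_1_l; apply lt_INR; lia).
    assert (0 < t * (b / 2) * (1 - p / q)) by (apply Rmult_lt_0_compat; nra).
    nra.
Qed.

Lemma scaled_besselI_S_order_lt (l : nat) (b : R) :
  0 < b <= 2 * INR l -> INR (S l) * besselI (S l) b < INR l * besselI l b.
Proof.
  intro Hb. rewrite !besselI_Series, <- !Series_scal_l.
  apply (Series_lt _ _ 1).
  - apply ex_series_Rmult_l, ex_series_besselI_term.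
  - apply ex_series_Rmult_l, ex_series_besselI_term.
  - intro k. apply (scaled_besselI_term_S_order l b k Hb).
  - apply (scaled_besselI_term_S_order l b 1 Hb). lia.
Qed.

Lemma scaled_besselI_lt (m l : nat) (b : R) :
  (m < l)%nat -> 0 < b <= 2 * INR m -> INR l * besselI l b < INR m * besselI m b.
Proof.
  intros Hml Hb. induction Hml as [|l Hml IH].
  - apply scaled_besselI_S_order_lt. exact Hb.
  - eapply Rlt_trans; [|exact IH].
    apply scaled_besselI_S_order_lt.
    assert (INR m <= INR l) by (apply le_INR; lia). lra.
Qed.

Theorem lemma3p1 (beta_star : R)
  (Hpos : 0 < beta_star)
  (Hsol : besselI 2 beta_star = / 2 * besselI 1 beta_star)
  (Huniq : forall b : R, 0 < b -> besselI 2 b = / 2 * besselI 1 b -> b = beta_star)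
  (beta : R) (Hb0 : 0 < beta) (Hb1 : beta <= beta_star) :
  (forall l : nat, (1 <= l)%nat -> besselI l beta <= besselI 1 beta / INR l) /\
  (forall l : nat, (3 <= l)%nat -> besselI l beta < besselI 1 beta / INR l).
Proof.
  set (gap := fun b => 2 * besselI 2 b - besselI 1 b).
  assert (gap_cont : continuity gap).
  { apply continuity_minus; [apply continuity_scal|]; apply continuity_besselI. }
  assert (gap_neg : forall x, 0 < x <= 1 -> gap x < 0).
  { intros x Hx. pose proof (twice_besselI2_lt_besselI1 x ltac:(lra)). unfold gap; lra. }
  assert (gap_root : forall z, 0 < z -> gap z = 0 -> z = beta_star).
  { intros z Hz Hgap. apply Huniq; [exact Hz|]. unfold gap in Hgap; lra. }
  assert (Hstar : beta_star <= 4).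
  { apply (unique_root_le gap beta_star 1 4); try assumption; [lra| apply gap_neg; lra|].
    pose proof besselI1_lt_twice_besselI2_at_4. unfold gap; lra. }
  assert (Hgap : 2 * besselI 2 beta <= besselI 1 beta).
  { pose proof (nonpos_below_unique_root gap beta_star 1 beta gap_cont ltac:(lra)
                  gap_neg gap_root ltac:(lra)).
    unfold gap in *; lra. }
  assert (Hstrict : forall l, (3 <= l)%nat -> besselI l beta < besselI 1 beta / INR l).
  { intros l Hl.
    pose proof (scaled_besselI_lt 2 l beta ltac:(lia) ltac:(simpl; lra)) as Hlt.
    pose proof (lt_0_INR l ltac:(lia)).
    apply Rmult_lt_reg_l with (INR l); [lra|].
    replace (INR l * (besselI 1 beta / INR l)) with (besselI 1 beta) by (field; lra).
    simpl INR in Hlt at 2. lra. }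
  split; [|exact Hstrict].
  intros l Hl. destruct l as [|[|[|l]]].
  - lia.
  - simpl INR. lra.
  - simpl INR. lra.
  - left. apply Hstrict. lia.
Qed.
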